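(* Let $\alpha>0$ be fixed and let $\mathscr{K}$ be a convex feasible functional. Consider the augmented dual ascent scheme $$x^{n+1} = \operatorname{arg\,min}_{x} \mathscr{K}(x)+\langle x,\Lambda^n\rangle +\frac{\alpha}{2}\|x\|^2,\qquad \Lambda^{n+1} = \Lambda^{n} + \alpha\mathcal{P}_{\mathcal{M}^\perp}(x^{n+1}),\qquad \Lambda^0=0.$$ Suppose that $(\Lambda^{n})_{n=1}^\infty$ is a bounded sequence. Then $(x^{n})_{n=1}^\infty$ and $(\Lambda^{n})_{n=1}^\infty$ converge to some limits $x^\star$ and $\Lambda^\star$, where $x^\star$ is the solution to $\operatorname{arg\,min}_{x\in\mathcal{M}}\mathscr{K}(x)+\frac{\alpha}{2}\|x\|^2$.
   Context: $\mathcal{H}$ is a finite dimensional Hilbert space, $\mathcal{M}\subset\mathcal{H}$ a linear subspace, $\mathcal{P}_{\mathcal{M}^\perp}$ the orthogonal projection onto $\mathcal{M}^\perp$. A functional $\mathscr{K}:\mathcal{H}\to(-\infty,\infty]$ is called feasible if it is lower semi-continuous, proper (not identically $\infty$), bounded below, and satisfies $\lim_{\|x\|\rightarrow\infty}\mathscr{K}(x)/\|x\|=\infty$. *)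

(* The finite-dimensional real Hilbert space H is
   modelled as 'rV[R]_d with the standard (Euclidean) inner product. *)
From HB Require Import structures.
From mathcomp Require Import all_boot all_order all_algebra.
From mathcomp Require Import all_classical all_reals all_analysis.
Set Implicit Arguments. Unset Strict Implicit. Unset Printing Implicit Defensive.
Import Order.TTheory GRing.Theory Num.Theory.
Import numFieldNormedType.Exports.
Local Open Scope ring_scope.

Section Defs.
Variables (R : realType) (d : nat).
Local Notation H := 'rV[R]_d.

Definition ip (x y : H) : R := (x *m y^T) 0 0.
Definition enorm (x : H) : R := Num.sqrt (ip x x).

(* The linear subspace M is the row space of a square matrix M (mxalgebra). *)
Definition in_sub (M : 'M[R]_d) (x : H) : Prop := (x <= M)%MS.
Definition in_perp (M : 'M[R]_d) (x : H) : Prop :=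
  forall y : H, in_sub M y -> ip x y = 0.
Definition is_orth_proj_perp (M : 'M[R]_d) (P : H -> H) : Prop :=
  forall v : H, in_perp M (P v) /\ in_sub M (v - P v).

Local Open Scope ereal_scope.
Definition feasible (K : H -> \bar R) : Prop :=
  [/\ forall x, K x != -oo,
      lower_semicontinuous K,
      exists x, K x != +oo,
      exists c : R, forall x, c%:E <= K x &
      forall A : R, exists r : R, forall x : H,
        (r <= enorm x)%R -> (A * enorm x)%:E <= K x ].
(* note: for enorm x > 0, A*|x| <= K x iff K x / |x| >= A; this is the
   unfolding of lim_{|x| -> oo} K(x)/|x| = +oo *)

Definition convex_fun (K : H -> \bar R) : Prop :=
  forall (x y : H) (t : R), (0 <= t <= 1)%R ->
    K (t *: x + (1 - t) *: y)%R <= t%:E * K x + (1 - t)%:E * K y.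
End Defs.

From HB Require Import structures.
From mathcomp Require Import all_boot all_order all_algebra.
From mathcomp Require Import all_classical all_reals all_analysis.
From mathcomp Require Import ring lra.
Import Order.TTheory GRing.Theory Num.Theory.
Import numFieldNormedType.Exports.
Local Open Scope classical_set_scope.
Local Open Scope ring_scope.

(* The values of the augmented subproblems increase by at least
   alpha/2 |P x^(n+1)|^2 at each step and are bounded because Lambda is, so they
   converge and P x^(n+1) -> 0.  Let Lambda* be a cluster point of Lambda: it lies
   in M^perp, and comparing the subproblems at steps n <= m gives
   <P x^(n+1), Lambda^n - Lambda*> <= 0, whence
   |Lambda^n - Lambda*|^2 - 2 alpha (value n) is nonincreasing.  Hence
   |Lambda^n - Lambda*| converges, and to 0 since Lambda* is a cluster point.  The
   minimiser of a strongly convex objective is alpha^-1-Lipschitz in the linear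
   term, so x^n converges along with Lambda^n, to some x* in M.  Lower
   semicontinuity of K finally turns the minimality of x^(n+1) against any y in
   M into the minimality of x*. *)

Lemma cluster_closed {T : topologicalType} {F : set_system T} {A : set T} {v : T} :
  closed A -> F A -> cluster F v -> A v.
Proof. by move=> /closure_id cA FA; rewrite clusterE => /(_ A FA); rewrite -cA. Qed.

Lemma lower_semicontinuous_cvg_le {R : realType} {T : topologicalType}
    {K : T -> \bar R} {u : nat -> T} {v : T} {c : nat -> R} {l : R} :
  lower_semicontinuous K -> u @ \oo --> v -> c @ \oo --> l ->
  (forall n, (K (u n) <= (c n)%:E)%E) -> (K v <= l%:E)%E.
Proof.
move=> Klsc uv cl Kuc; rewrite leNgt; apply/negP => lKv.
have [a la aKv] : exists2 a, l < a & (a%:E < K v)%E.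
  move: lKv; case: (K v) => [r||] //; last by exists (l + 1); [lra | rewrite ltey].
  by rewrite lte_fin => lr; exists ((l + r) / 2); rewrite ?lte_fin; lra.
have [V Vv aV] := Klsc v a aKv.
have [n [/aV aKu /ltW ca]] : exists n, V (u n) /\ c n < a.
  suff : \forall n \near \oo, V (u n) /\ c n < a by move=> /filter_ex.
  by near=> n; split; near: n; [exact: uv | exact: cvgr_lt cl _ la].
by have := le_trans (Kuc n) (ca : ((c n)%:E <= a%:E)%E); rewrite leNgt aKu.
Unshelve. all: by end_near. Qed.

Lemma slope_ge0_of_quadratic_ge0 {R : realFieldType} (A E : R) : 0 <= E ->
  (forall t, 0 < t <= 1 -> 0 <= t * A + t ^+ 2 * E) -> 0 <= A.
Proof.
move=> E0 h; case: (lerP 0 A) => // A0.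
(* For A < 0 this t lies in (0, 1] and makes the quadratic negative. *)
pose t := - A / (- A + E).
have den : 0 < - A + E by lra.
have t0 : 0 < t by rewrite /t divr_gt0 //; lra.
have t1 : t <= 1 by rewrite /t ler_pdivrMr //; lra.
have : 0 < t * (A ^+ 2 / (- A + E)).
  by rewrite mulr_gt0 // divr_gt0 // exprn_even_gt0 //; lra.
have -> : t * (A ^+ 2 / (- A + E)) = - (t * A + t ^+ 2 * E) by rewrite /t; field; lra.
by have := h t; rewrite t0 t1 => /(_ isT); lra.
Qed.

Section inner_product.
Context {R : realType} {d : nat}.
Local Notation H := 'rV[R]_d.
Implicit Types (u v w : H).

Lemma ipE u v : ip u v = \sum_j u 0 j * v 0 j.
Proof. by rewrite /ip !mxE; apply: eq_bigr => j _; rewrite mxE. Qed.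

Lemma ipC u v : ip u v = ip v u.
Proof. by rewrite !ipE; apply: eq_bigr => j _; rewrite mulrC. Qed.

Lemma ipDl u v w : ip (u + v) w = ip u w + ip v w.
Proof. by rewrite /ip mulmxDl mxE. Qed.

Lemma ipZl a u v : ip (a *: u) v = a * ip u v.
Proof. by rewrite /ip -scalemxAl mxE. Qed.

Lemma ipNl u v : ip (- u) v = - ip u v.
Proof. by rewrite -scaleN1r ipZl mulN1r. Qed.

Lemma ipBl u v w : ip (u - v) w = ip u w - ip v w.
Proof. by rewrite ipDl ipNl. Qed.

Lemma ipDr u v w : ip w (u + v) = ip w u + ip w v.
Proof. by rewrite ipC ipDl !(ipC w). Qed.

Lemma ipZr a u v : ip v (a *: u) = a * ip v u.
Proof. by rewrite ipC ipZl ipC. Qed.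

Lemma ipNr u v : ip v (- u) = - ip v u.
Proof. by rewrite ipC ipNl ipC. Qed.

Lemma ipBr u v w : ip w (u - v) = ip w u - ip w v.
Proof. by rewrite ipDr ipNr. Qed.

Lemma ip0l u : ip 0 u = 0.
Proof. by rewrite /ip mul0mx mxE. Qed.

Lemma ip_ge0 u : 0 <= ip u u.
Proof. by rewrite ipE; apply: sumr_ge0 => j _; rewrite -expr2 sqr_ge0. Qed.

Lemma enorm_sqr u : enorm u ^+ 2 = ip u u.
Proof. by rewrite /enorm sqr_sqrtr // ip_ge0. Qed.

Lemma ip_subC u v : ip (u - v) (u - v) = ip (v - u) (v - u).
Proof. by rewrite -opprB ipNl ipNr opprK. Qed.

Lemma ip2_le_sqr u v : 2 * ip u v <= ip u u + ip v v.
Proof. have := ip_ge0 (u - v); rewrite !(ipBl, ipBr) (ipC v u); lra. Qed.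

Lemma ip_add_le u v : ip (u + v) (u + v) <= 2 * ip u u + 2 * ip v v.
Proof. have := ip2_le_sqr u v; rewrite !(ipDl, ipDr) (ipC v u); lra. Qed.

Lemma ip_sub_le u v w :
  ip (u - w) (u - w) <= 2 * ip (u - v) (u - v) + 2 * ip (w - v) (w - v).
Proof.
have -> : u - w = (u - v) + (v - w) by apply/rowP => j; rewrite !mxE; ring.
by rewrite (ip_subC w v) ip_add_le.
Qed.

Lemma ip_addZ u v t :
  ip (u + t *: v) (u + t *: v) = ip u u + 2 * t * ip u v + t ^+ 2 * ip v v.
Proof. by rewrite !(ipDl, ipDr, ipZl, ipZr) (ipC v u); ring. Qed.

Lemma ip_subsqr u v : ip (u - v) (u - v) = ip u u - 2 * ip u v + ip v v.
Proof. by rewrite !(ipBl, ipBr) (ipC v u); ring. Qed.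

Lemma sqr_le_of_ip_le_opp a u w : 0 < a -> a * ip u u <= - ip u w ->
  a ^+ 2 * ip u u <= ip w w.
Proof.
move=> a0 uw; have := ip_ge0 (a *: u + w).
rewrite !(ipDl, ipDr, ipZl, ipZr) (ipC w u).
have := ler_wpM2l (ltW a0) uw; nra.
Qed.

Lemma normr_sqr_le_ip u : `|u| ^+ 2 <= ip u u.
Proof.
have -> : `|u| = mx_norm u by [].
have [->|/mx_norm_neq0 [[i j] /= ->]] := eqVneq (mx_norm u) 0.
  by rewrite expr0n ip_ge0.
rewrite (ord1 i) ipE (bigD1 j) //= real_normK ?num_real // -expr2 lerDl.
by apply: sumr_ge0 => k _; rewrite -expr2 sqr_ge0.
Qed.

Lemma ip_cvg {T} {F : set_system T} {FF : Filter F} {f g : T -> H} {a b : H} :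
  f @ F --> a -> g @ F --> b -> (fun t => ip (f t) (g t)) @ F --> ip a b.
Proof.
move=> fa gb; under eq_cvg do rewrite ipE; rewrite ipE.
apply: (cvg_big (@add_continuous R^o)) => j _.
apply: cvgM.
  exact: (continuous_cvg _ (@coord_continuous R 1 d 0 j a) fa).
exact: (continuous_cvg _ (@coord_continuous R 1 d 0 j b) gb).
Qed.

Lemma cvg_ip_dist {T} {F : set_system T} {FF : Filter F} (f : T -> H) a :
  (forall e, 0 < e -> \forall t \near F, ip (f t - a) (f t - a) <= e) ->
  f @ F --> a.
Proof.
move=> small; apply/cvgrPdist_le => e e0.
near=> t; suff : `|a - f t| ^+ 2 <= e ^+ 2 by rewrite ler_pXn2r ?nnegrE // ltW.
apply: le_trans (normr_sqr_le_ip _) _; rewrite ip_subC.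
by near: t; apply: small; rewrite exprn_gt0.
Unshelve. all: by end_near. Qed.

Lemma bounded_cluster {u : nat -> H} {B : R} : (forall n, ip (u n) (u n) <= B) ->
  exists v, cluster (u @ \oo) v.
Proof.
move=> uB; pose A := closed_ball_ (fun w : H => `|w|) 0 (B + 1).
have Au n : A (u n).
  rewrite /A /closed_ball_ /= sub0r normrN.
  have := le_trans (normr_sqr_le_ip (u n)) (uB n).
  have := normr_ge0 (u n); nra.
have cA : compact A.
  apply: bounded_closed_compact; last exact: closed_closed_ball_.
  exists (B + 1); split; first exact: num_real.
  move=> r Br w; rewrite /A /closed_ball_ /= sub0r normrN => /le_trans; apply.
  exact: ltW.
have uA : (u @ \oo) A by exists 0%N => // n _; exact: Au.
have [v [_ ?]] := cA (u @ \oo) (fmap_proper_filter _ _) uA.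
by exists v.
Qed.

Lemma ip_continuous {f g : H -> H} :
  continuous f -> continuous g -> continuous (fun z => ip (f z) (g z)).
Proof. by move=> cf cg z; exact: ip_cvg (cf z) (cg z). Qed.

Lemma closed_ip {A : set R} {f g : H -> H} :
  continuous f -> continuous g -> closed A -> closed [set z | A (ip (f z) (g z))].
Proof. by move=> cf cg cA; exact: preimage_closed (fun z _ => ip_continuous cf cg z) cA. Qed.

Lemma subr_continuous a : continuous (fun z : H => z - a).
Proof. by move=> z; exact: cvgB cvg_id (cvg_cst a). Qed.

Lemma cluster_ip_closed {u : nat -> H} {v : H} {f g : H -> H} (A : set R) :
  cluster (u @ \oo) v -> continuous f -> continuous g -> closed A ->
  (\forall n \near \oo, A (ip (f (u n)) (g (u n)))) -> A (ip (f v) (g v)).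
Proof. by move=> uv cf cg cA Au; exact: cluster_closed (closed_ip cf cg cA) Au uv. Qed.

Lemma orth_proj_perp_sub_le {M : 'M[R]_d} {P : H -> H} u v :
  is_orth_proj_perp M P -> ip (P u - P v) (P u - P v) <= ip (u - v) (u - v).
Proof.
move=> proj; have [[Pu uPu] [Pv vPv]] := (proj u, proj v).
have -> : u - v = (u - P u - (v - P v)) + (P u - P v).
  by apply/rowP => j; rewrite !mxE; ring.
have ab : ip (u - P u - (v - P v)) (P u - P v) = 0.
  by rewrite ipC ipBl Pu ?Pv ?subrr //; rewrite /in_sub addmx_sub // eqmx_opp.
have := ip_addZ (u - P u - (v - P v)) (P u - P v) 1; rewrite scale1r ab => ->.
have := ip_ge0 (u - P u - (v - P v)); lra.
Qed.

Lemma closed_in_sub (M : 'M[R]_d) : closed [set z : H | in_sub M z].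
Proof.
set C := cokermx M.
have ip_col z j : ip z (col j C)^T = (z *m C) 0 j.
  by rewrite /ip trmxK !mxE; apply: eq_bigr => i _; rewrite !mxE.
have -> : [set z : H | in_sub M z] = \bigcap_j [set z | ip z (col j C)^T = 0].
  apply/seteqP; split => z; rewrite /= /in_sub submxE -/C.
    by move=> /eqP zC j _ /=; rewrite ip_col zC mxE.
  by move=> zC; apply/eqP/rowP => j; rewrite -ip_col mxE (zC j).
apply: closed_bigI => j _.
apply: (closed_ip (A := [set 0])); last exact: closed_eq.
  by move=> ?; exact: cvg_id.
exact: cst_continuous.
Qed.

End inner_product.

Section prox_objective.
Context {R : realType} {d : nat}.
Local Notation H := 'rV[R]_d.

Definition prox_obj (K : H -> \bar R) (L : H) (alpha : R) (y : H) : \bar R :=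
  (K y + (ip y L + alpha / 2 * ip y y)%:E)%E.

Lemma prox_obj_quadratic_growth (K : H -> \bar R) L alpha x y kx ky :
  convex_fun K -> 0 <= alpha ->
  (forall z, (prox_obj K L alpha x <= prox_obj K L alpha z)%E) ->
  K x = kx%:E -> K y = ky%:E ->
  kx + ip x L + alpha / 2 * ip x x + alpha / 2 * ip (y - x) (y - x)
    <= ky + ip y L + alpha / 2 * ip y y.
Proof.
move=> Kconv a0 xmin Kx Ky.
suff : 0 <= ky - kx + ip (y - x) L + alpha * ip x (y - x).
  have eyy := ip_addZ x (y - x) 1; rewrite scale1r subrKC expr1n in eyy.
  rewrite eyy (ipBl y x L); lra.
(* First-order optimality: compare x with x + t (y - x) and let t -> 0. *)
apply: (@slope_ge0_of_quadratic_ge0 _ _ (alpha / 2 * ip (y - x) (y - x))).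
  by rewrite mulr_ge0 ?ip_ge0 //; lra.
move=> t /andP[t0 t1]; set z := x + t *: (y - x).
have Kz : (K z <= (t * ky + (1 - t) * kx)%:E)%E.
  have -> : z = t *: y + (1 - t) *: x by rewrite /z scalerBr scalerBl scale1r addrCA.
  by rewrite EFinD !EFinM -Ky -Kx Kconv // (ltW t0).
have := xmin z; rewrite /prox_obj Kx.
case: (K z) Kz => [kz||] //; rewrite lee_fin -!EFinD lee_fin /z ip_addZ ipDl ipZl.
nra.
Qed.

End prox_objective.

Section dual_ascent.
Context {R : realType} {d : nat}.
Local Notation H := 'rV[R]_d.
Context {M : 'M[R]_d} {P : H -> H} {K : H -> \bar R} {alpha B : R}.
Context {y0 : H} {k0 : R} {x Lam : nat -> H}.
Hypothesis P_proj : is_orth_proj_perp M P.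
Hypothesis alpha_gt0 : 0 < alpha.
Hypothesis K_convex : convex_fun K.
Hypothesis K_lsc : lower_semicontinuous K.
Hypothesis K_gtNy : forall y, K y != -oo%E.
Hypothesis K_y0 : K y0 = k0%:E.
Hypothesis Lam0 : Lam 0 = 0.
Hypothesis x_min : forall n y,
  (prox_obj K (Lam n) alpha (x n.+1) <= prox_obj K (Lam n) alpha y)%E.
Hypothesis Lam_step : forall n, Lam n.+1 = Lam n + alpha *: P (x n.+1).
Hypothesis Lam_bounded : forall n, ip (Lam n) (Lam n) <= B.

Lemma Lam_perp n : in_perp M (Lam n).
Proof.
elim: n => [|n IH] y yM; first by rewrite Lam0 ip0l.
by rewrite Lam_step ipDl ipZl IH // (P_proj _).1 // mulr0 addr0.
Qed.

Lemma ip_x_perp n {v : H} : in_perp M v -> ip (x n.+1) v = ip (P (x n.+1)) v.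
Proof.
move=> vperp; rewrite -[in LHS](subrK (P (x n.+1)) (x n.+1)) ipDl.
by rewrite ipC vperp ?add0r //; exact: (P_proj _).2.
Qed.

Definition Kx n := fine (K (x n.+1)).

Lemma KxE n : K (x n.+1) = (Kx n)%:E.
Proof.
have := x_min n y0; rewrite /prox_obj K_y0 /Kx.
by case: (K (x n.+1)) (K_gtNy (x n.+1)).
Qed.

Definition opt_value n :=
  Kx n + ip (x n.+1) (Lam n) + alpha / 2 * ip (x n.+1) (x n.+1).

Lemma opt_value_growth n {y : H} {ky : R} : K y = ky%:E ->
  opt_value n + alpha / 2 * ip (y - x n.+1) (y - x n.+1)
    <= ky + ip y (Lam n) + alpha / 2 * ip y y.
Proof. by apply: prox_obj_quadratic_growth (KxE n) => //; exact: ltW. Qed.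

Lemma opt_value_incr n :
  opt_value n + alpha / 2 * ip (P (x n.+1)) (P (x n.+1)) <= opt_value n.+1.
Proof.
have grow := opt_value_growth n (KxE n.+1).
have step : opt_value n.+1 = Kx n.+1 + ip (x n.+2) (Lam n)
    + alpha / 2 * ip (x n.+2) (x n.+2) + alpha * ip (P (x n.+2)) (P (x n.+1)).
  by rewrite /opt_value Lam_step ipDr ipZr (ip_x_perp n.+1 (P_proj _).1); lra.
have a2 : 0 <= alpha / 2 by rewrite divr_ge0 // ltW.
have := ler_wpM2l a2 (orth_proj_perp_sub_le (x n.+2) (x n.+1) P_proj).
rewrite ip_subsqr; have := mulr_ge0 a2 (ip_ge0 (P (x n.+2))); lra.
Qed.

Lemma opt_value_nondecreasing : nondecreasing_seq opt_value.
Proof.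
apply/nondecreasing_seqP => n; have := opt_value_incr n.
have := mulr_ge0 (ltW alpha_gt0) (ip_ge0 (P (x n.+1))); lra.
Qed.

Lemma opt_value_bounded : has_ubound (range opt_value).
Proof.
exists (k0 + (ip y0 y0 + B) / 2 + alpha / 2 * ip y0 y0) => _ [n _ <-].
have := opt_value_growth n K_y0; have := ip2_le_sqr y0 (Lam n).
have := Lam_bounded n; have := mulr_ge0 (ltW alpha_gt0) (ip_ge0 (y0 - x n.+1)).
lra.
Qed.

Lemma opt_value_is_cvg : cvgn opt_value.
Proof.
exact: nondecreasing_is_cvgn opt_value_nondecreasing opt_value_bounded.
Qed.

Lemma P_x_cvg0 : (fun n => P (x n.+1)) @ \oo --> (0 : H).
Proof.
apply: cvg_ip_dist => e e0.
have [l gl] := (cvg_ex _).1 opt_value_is_cvg.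
have dg : (fun n => opt_value n.+1 - opt_value n) @ \oo --> 0.
  by rewrite -(subrr l); apply: cvgB => //; rewrite cvg_shiftS.
have a2 : 0 < alpha / 2 by rewrite divr_gt0.
apply: filterS ((cvgrPdist_le _ _).1 dg _ (mulr_gt0 a2 e0)) => n.
rewrite sub0r normrN => small; rewrite subr0 -(ler_pM2l a2).
have := opt_value_incr n; have := ler_norm (opt_value n.+1 - opt_value n); lra.
Qed.

Lemma x_lipschitz m n : alpha ^+ 2 * ip (x m.+1 - x n.+1) (x m.+1 - x n.+1)
  <= ip (Lam m - Lam n) (Lam m - Lam n).
Proof.
apply: sqr_le_of_ip_le_opp => //.
have := opt_value_growth n (KxE m); have := opt_value_growth m (KxE n).
rewrite /opt_value (ip_subC (x n.+1)) !(ipBl, ipBr) (ipC (x n.+1) (x m.+1)); lra.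
Qed.

Lemma x_bounded n :
  ip (x n.+1) (x n.+1) <= 2 * (B / alpha ^+ 2) + 2 * ip (x 1) (x 1).
Proof.
rewrite -[x n.+1](subrK (x 1)); apply: le_trans (ip_add_le _ _) _.
rewrite lerD2r ler_pM2l // ler_pdivlMr ?exprn_gt0 // mulrC.
by apply: le_trans (x_lipschitz n 0) _; rewrite Lam0 subr0.
Qed.

Section Lam_cluster.
Context {Lb : H} (Lb_cluster : cluster (Lam @ \oo) Lb).

Lemma Lb_perp : in_perp M Lb.
Proof.
move=> y yM.
apply: (cluster_ip_closed (f := fun z => z) (g := fun=> y) [set 0] Lb_cluster).
- by move=> ?; exact: cvg_id.
- exact: cst_continuous.
- exact: closed_eq.
- by apply: nearW => n; exact: Lam_perp.
Qed.

Lemma fejer_ip_le0 n : ip (P (x n.+1)) (Lam n - Lb) <= 0.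
Proof.
(* For m >= n, testing the m-th subproblem at x^(n+1) gives
   <x^(n+1), Lam m - Lam n> >= opt_value m - opt_value n >= 0. *)
have : 0 <= ip (Lb - Lam n) (x n.+1).
  apply: (cluster_ip_closed (f := fun z => z - Lam n) (g := fun=> x n.+1)
    [set r | 0 <= r] Lb_cluster).
  - exact: subr_continuous.
  - exact: cst_continuous.
  - exact: closed_ge.
  - near=> m; have nm : (n <= m)%N by near: m; exact: nbhs_infty_ge.
    have := opt_value_growth m (KxE n); have := opt_value_nondecreasing _ _ nm.
    have := mulr_ge0 (ltW alpha_gt0) (ip_ge0 (x n.+1 - x m.+1)).
    rewrite /opt_value /= (ipBl (Lam m)) (ipC (Lam m)) (ipC (Lam n)); lra.
rewrite -(ip_x_perp n); last by move=> y yM; rewrite ipBl Lam_perp ?Lb_perp ?subrr.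
by move=> h; rewrite -opprB ipNr ipC; lra.
Unshelve. all: by end_near. Qed.

Definition Lam_dist n := ip (Lam n - Lb) (Lam n - Lb).

Lemma Lam_dist_step n : Lam_dist n.+1 <= Lam_dist n + 2 * alpha * (opt_value n.+1 - opt_value n).
Proof.
rewrite /Lam_dist Lam_step addrAC ip_addZ ipC.
have a2 : 0 <= 2 * alpha by rewrite mulr_ge0 // ltW.
have := ler_wpM2l a2 (opt_value_incr n); have := ler_wpM2l a2 (fejer_ip_le0 n); lra.
Qed.

Lemma Lam_dist_is_cvg : cvgn Lam_dist.
Proof.
pose E n := Lam_dist n - 2 * alpha * opt_value n.
have E_noninc : nonincreasing_seq E.
  by apply/nonincreasing_seqP => n; have := Lam_dist_step n; rewrite /E; lra.
have E_lb : has_lbound (range E).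
  have [G G_ub] := opt_value_bounded.
  exists (- 2 * alpha * G) => _ [n _ <-].
  have a2 : 0 <= 2 * alpha by rewrite mulr_ge0 // ltW.
  have := ler_wpM2l a2 (G_ub _ (ex_intro2 _ _ n I erefl)).
  by have := ip_ge0 (Lam n - Lb); rewrite /E /Lam_dist; lra.
have [e Ee] := (cvg_ex _).1 (nonincreasing_is_cvgn E_noninc E_lb).
have [g gg] := (cvg_ex _).1 opt_value_is_cvg.
have -> : Lam_dist = (fun n => E n + 2 * alpha * opt_value n).
  by apply/funext => n; rewrite /E subrK.
by apply/cvg_ex; exists (e + 2 * alpha * g); apply: cvgD Ee (cvgM (cvg_cst _) gg).
Qed.

Lemma Lam_dist_cvg0 : Lam_dist @ \oo --> 0.
Proof.
have [l Dl] := (cvg_ex _).1 Lam_dist_is_cvg.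
suff l0 : l = 0 by rewrite -l0.
apply/eqP; rewrite eq_le; apply/andP; split; last first.
  have := closed_cvg _ (@closed_ge R 0) _ _ Dl; apply.
  by apply: nearW => n; exact: ip_ge0.
rewrite leNgt; apply/negP => l0.
have : l / 2 <= ip (Lb - Lb) (Lb - Lb).
  apply: (cluster_ip_closed (f := fun z => z - Lb) (g := fun z => z - Lb)
    [set r | l / 2 <= r] Lb_cluster).
  - exact: subr_continuous.
  - exact: subr_continuous.
  - exact: closed_ge.
  - have l2 : l / 2 < l by lra.
    by apply: filterS (cvgr_gt l Dl _ l2) => n /ltW.
by rewrite subrr ip0l; lra.
Qed.

Lemma Lam_dist_near0 {e : R} : 0 < e -> \forall n \near \oo, Lam_dist n <= e.
Proof.
move=> e0; apply: filterS ((cvgrPdist_le _ _).1 Lam_dist_cvg0 _ e0) => n.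
by rewrite sub0r normrN ger0_norm // ip_ge0.
Qed.

Lemma Lam_cvg : Lam @ \oo --> Lb.
Proof. by apply: cvg_ip_dist => e e0; exact: Lam_dist_near0. Qed.

Section x_cluster.
Context {xs : H} (xs_cluster : cluster ((fun n => x n.+1) @ \oo) xs).

Lemma x_cvg : (fun n => x n.+1) @ \oo --> xs.
Proof.
(* Lam is Cauchy, hence so is x by [x_lipschitz]; then pass to the cluster point. *)
apply: cvg_ip_dist => e e0.
have a2e : 0 < alpha ^+ 2 * e / 4 by rewrite divr_gt0 // mulr_gt0 // exprn_gt0.
have [N _ DN] := Lam_dist_near0 a2e.
exists N => // n /= Nn; rewrite ip_subC.
apply: (cluster_ip_closed (f := fun z => z - x n.+1) (g := fun z => z - x n.+1)
  [set r | r <= e] xs_cluster).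
- exact: subr_continuous.
- exact: subr_continuous.
- exact: closed_le.
- exists N => // m /= Nm.
  rewrite -(ler_pM2l (exprn_gt0 2 alpha_gt0)); apply: le_trans (x_lipschitz m n) _.
  apply: le_trans (ip_sub_le _ Lb _) _; have := DN m Nm; have := DN n Nn.
  rewrite /Lam_dist; lra.
Qed.

Lemma xs_in_sub : in_sub M xs.
Proof.
rewrite -[xs]subr0; apply: (closed_cvg _ (closed_in_sub M)) (cvgB x_cvg P_x_cvg0).
by apply: nearW => n; exact: (P_proj _).2.
Qed.

Lemma xs_min y : in_sub M y ->
  (K xs + (alpha / 2 * ip xs xs)%:E <= K y + (alpha / 2 * ip y y)%:E)%E.
Proof.
move=> yM; case Ky: (K y) => [ky||]; last by have := K_gtNy y; rewrite Ky.
  pose c n := ky + alpha / 2 * ip y y - ip (x n.+1) (Lam n)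
    - alpha / 2 * ip (x n.+1) (x n.+1).
  have c_cvg : c @ \oo --> ky + alpha / 2 * ip y y - ip xs Lb - alpha / 2 * ip xs xs.
    apply: cvgB; first by apply: cvgB; [exact: cvg_cst | exact: ip_cvg x_cvg Lam_cvg].
    exact: cvgM (cvg_cst _) (ip_cvg x_cvg x_cvg).
  have := lower_semicontinuous_cvg_le K_lsc x_cvg c_cvg.
  rewrite (ipC xs) (Lb_perp _ xs_in_sub) subr0.
  have K_le_c n : (K (x n.+1) <= (c n)%:E)%E.
    have := x_min n y; rewrite /prox_obj KxE Ky -!EFinD !lee_fin /c.
    by rewrite (ipC y) (Lam_perp _ _ yM); lra.
  move=> /(_ K_le_c); case: (K xs) (K_gtNy xs) => [kx||] //.
  by rewrite -!EFinD !lee_fin; lra.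
by rewrite addye ?leey.
Qed.

End x_cluster.
End Lam_cluster.

Lemma dual_ascent_cvg : exists xs Ls : H,
  [/\ (fun n => x n.+1) @ \oo --> xs, (fun n => Lam n.+1) @ \oo --> Ls,
    in_sub M xs & forall y, in_sub M y ->
      (K xs + (alpha / 2 * ip xs xs)%:E <= K y + (alpha / 2 * ip y y)%:E)%E].
Proof.
have [Lb Lb_cluster] := bounded_cluster Lam_bounded.
have [xs xs_cluster] := bounded_cluster x_bounded.
exists xs, Lb; split.
- exact: (x_cvg Lb_cluster xs_cluster).
- by rewrite cvg_shiftS; exact: Lam_cvg Lb_cluster.
- exact: (xs_in_sub Lb_cluster xs_cluster).
- exact: (xs_min Lb_cluster xs_cluster).
Qed.

End dual_ascent.

Theorem theorem4 (R : realType) (d : nat) (M : 'M[R]_d)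
  (P : 'rV[R]_d -> 'rV[R]_d) (K : 'rV[R]_d -> \bar R) (alpha : R)
  (x Lam : nat -> 'rV[R]_d) :
  is_orth_proj_perp M P ->
  0 < alpha ->
  feasible K -> convex_fun K ->
  Lam 0%N = 0 ->
  (forall n : nat, forall y : 'rV[R]_d,
     (K (x n.+1) + (ip (x n.+1) (Lam n) + alpha / 2 * enorm (x n.+1) ^+ 2)%:E
      <= K y + (ip y (Lam n) + alpha / 2 * enorm y ^+ 2)%:E)%E) ->
  (forall n : nat, Lam n.+1 = Lam n + alpha *: P (x n.+1)) ->
  (exists C : R, forall n : nat, (1 <= n)%N -> enorm (Lam n) <= C) ->
  exists (xs Ls : 'rV[R]_d),
    [/\ (fun n => x n.+1) @ \oo --> xs,
        (fun n => Lam n.+1) @ \oo --> Ls,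
        in_sub M xs &
        forall y : 'rV[R]_d, in_sub M y ->
          (K xs + (alpha / 2 * enorm xs ^+ 2)%:E
           <= K y + (alpha / 2 * enorm y ^+ 2)%:E)%E].
Proof.
move=> P_proj alpha_gt0 [K_gtNy K_lsc [y0 K_y0] _ _] K_convex Lam0 x_min Lam_step [C LamC].
have [k0 K_y0E] : exists k0, K y0 = k0%:E.
  by move: K_y0 (K_gtNy y0); case: (K y0) => // k0; exists k0.
have Lam_bounded n : ip (Lam n) (Lam n) <= C ^+ 2.
  have C0 : 0 <= C by apply: le_trans (LamC 1%N isT); exact: sqrtr_ge0.
  case: n => [|n]; first by rewrite Lam0 ip0l sqr_ge0.
  by rewrite -enorm_sqr lerXn2r ?nnegrE ?LamC ?sqrtr_ge0.
have x_min' n y : (prox_obj K (Lam n) alpha (x n.+1) <= prox_obj K (Lam n) alpha y)%E.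
  by have := x_min n y; rewrite !enorm_sqr.
have [xs [Ls [x_cvg Lam_cvg xs_in_sub xs_min]]] :=
  dual_ascent_cvg P_proj alpha_gt0 K_convex K_lsc K_gtNy K_y0E Lam0 x_min' Lam_step Lam_bounded.
exists xs, Ls; split => // y yM; rewrite !enorm_sqr; exact: xs_min.
Qed.
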